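(* Let $N$ be a finitary plain structural conflict net, and let $\approx$ be any equivalence relation on Petri nets such that $N_1 \approx^\Delta_{bSTb} N_2$ implies $N_1\approx N_2$, and $N_1\approx N_2$ implies $N_1\approx_{\mathscr F} N_2$. Then $N$ is distributable up to $\approx$ (i.e. there exists a distributed Petri net $D$ with $D\approx N$) if and only if $N$ has no fully reachable pure $\mathsf{M}$.
   Context: Fix a set $\mathrm{Act}$ of visible actions and an invisible action $\tau\notin\mathrm{Act}$. A (labelled) Petri net is a tuple $N=(S,T,F,M_0,\ell)$ with $S$ (places) and $T$ (transitions) disjoint sets, $F:(S\times T)\cup(T\times S)\to\mathbb N$ (flow relation with arc weights), $M_0\in\mathbb N^S$ (initial marking) and $\ell:T\to\mathrm{Act}\cup\{\tau\}$. A marking is a multiset $M\in\mathbb N^S$. For $x\in S\cup T$ the multisets ${}^\bullet x$, $x^\bullet$ are given by ${}^\bullet x(y)=F(y,x)$, $x^\bullet(y)=F(x,y)$, extended additively to finite multisets of transitions. For multisets, $A\le B$ is pointwise, $A\cap B$ is pointwise minimum and $A\cup B$ pointwise maximum. For a finite nonempty multiset $G$ of transitions, $M[G\rangle M'$ iff ${}^\bullet G\le M$ and $M'=M-{}^\bullet G+G^\bullet$; $M[t\rangle M'$ abbreviates $M[\{t\}\rangle M'$. The set $[M_0\rangle$ of reachable markings is the smallest set containing $M_0$ and closed under such steps. Transitions $t,u$ are concurrent, $t\smile u$, iff $M[\{t\}+\{u\}\rangle$ for some reachable $M$. $N$ is a structural conflict net iff $t\smile u$ implies ${}^\bullet t\cap{}^\bullet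 u=\emptyset$. $N$ is plain iff $\ell$ is injective and $\ell(t)\neq\tau$ for all $t$. $N$ is finitary iff ${}^\bullet t\neq\emptyset$ for all $t\in T$ and every reachable marking is finite and enables only finitely many transitions. $N$ has a fully reachable pure $\mathsf M$ iff there are $t,u,v\in T$ with ${}^\bullet t\cap{}^\bullet u\neq\emptyset$, ${}^\bullet u\cap{}^\bullet v\neq\emptyset$, ${}^\bullet t\cap{}^\bullet v=\emptyset$ and a reachable marking $M$ with ${}^\bullet t\cup{}^\bullet u\cup{}^\bullet v\le M$. $N$ is distributed iff there is a function $D$ from $S\cup T$ to some set of locations such that (1) for all $s\in S,t\in T$, if $s\in{}^\bullet t$ then $D(t)=D(s)$; and (2) for all $t,u\in T$, $t\smile u$ implies $D(t)\neq D(u)$. Step failures equivalence: write $M\xrightarrow{\alpha}M'$ ($\alpha\in\mathrm{Act}\cup\{\tau\}$) iff $M[t\rangle M'$ for some $t$ with $\ell(t)=\alpha$; $\Rightarrow$ is the reflexive transitive closure of $\xrightarrow{\tau}$; $M\overset{a_1\cdots a_n}{\Longrightarrow}M'$ iff $M\Rightarrow\xrightarrow{a_1}\Rightarrow\cdots\xrightarrow{a_n}\Rightarrow M'$. For a step $A$ (a finite nonempty multiset over $\mathrm{Act}$), $M\xrightarrow{A}$ iff $M[G\rangle$ for some finite multiset $G$ of transitions with no $\tau$-labelled element whose multiset of labels is $A$. A pair $(\sigma,X)$ with $\sigma\in\mathrm{Act}^*$ and $X$ a finite set of steps is a step failure pair of $N$ iff there is $M$ with $M_0\overset{\sigma}{\Longrightarrow}M$,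 $M\not\xrightarrow{\tau}$ and $M\not\xrightarrow{A}$ for all $A\in X$. $N_1\approx_{\mathscr F}N_2$ iff they have the same step failure pairs. Branching ST-bisimilarity with explicit divergence: An LTS is $(\mathfrak S,\mathfrak T,\mathfrak M_0)$ with $\mathfrak T\subseteq\mathfrak S\times(\mathfrak A\cup\{\tau\})\times\mathfrak S$; $\Rightarrow$ is the reflexive transitive closure of $\xrightarrow{\tau}$, and $\mathfrak M\xrightarrow{(\alpha)}\mathfrak M'$ means $\mathfrak M\xrightarrow{\alpha}\mathfrak M'$ or ($\alpha=\tau$ and $\mathfrak M=\mathfrak M'$). A branching bisimulation with explicit divergence between LTSs is a relation $\mathcal B\subseteq\mathfrak S_1\times\mathfrak S_2$ with: (1) $\mathfrak M_{0,1}\mathcal B\mathfrak M_{0,2}$; (2) if $\mathfrak M_1\mathcal B\mathfrak M_2$ and $\mathfrak M_1\xrightarrow{\alpha}\mathfrak M_1'$ then there are $\mathfrak M_2^\dagger,\mathfrak M_2'$ with $\mathfrak M_2\Rightarrow\mathfrak M_2^\dagger\xrightarrow{(\alpha)}\mathfrak M_2'$, $\mathfrak M_1\mathcal B\mathfrak M_2^\dagger$, $\mathfrak M_1'\mathcal B\mathfrak M_2'$; (3) symmetrically; (4) if $\mathfrak M_1\mathcal B\mathfrak M_2$ and there is an infinite sequence $\mathfrak M_1=\mathfrak M_1^0\xrightarrow{\tau}\mathfrak M_1^1\xrightarrow{\tau}\cdots$ with $\mathfrak M_1^k\mathcal B\mathfrak M_2$ for all $k$, then there is an infinite sequence $\mathfrak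 M_2=\mathfrak M_2^0\xrightarrow{\tau}\mathfrak M_2^1\xrightarrow{\tau}\cdots$ with $\mathfrak M_1^k\mathcal B\mathfrak M_2^l$ for all $k,l$; (5) symmetrically. The ST-LTS of a net has as states ST-markings $(M,U)\in\mathbb N^S\times T^*$, initial state $(M_0,\varepsilon)$, labels $a^+$ and $a^{-n}$ ($a\in\mathrm{Act}$, $n>0$) and $\tau$, with $(M,U)\xrightarrow{a^+}(M-{}^\bullet t,Ut)$ iff $\ell(t)=a$ and $M[t\rangle$; $(M,U)\xrightarrow{a^{-n}}(M+t^\bullet,U^{-n})$ iff the $n$-th element $t$ of $U$ has $\ell(t)=a$, where $U^{-n}$ is $U$ with its $n$-th element removed; $(M,U)\xrightarrow{\tau}(M',U)$ iff $M[t\rangle M'$ for some $t$ with $\ell(t)=\tau$. $N_1\approx^\Delta_{bSTb}N_2$ iff there is a branching bisimulation with explicit divergence between their ST-LTSs. *)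

From Stdlib Require Import List Permutation Relations RelationClasses Arith.
Import ListNotations.

Unset Implicit Arguments.

Section Nets.
Variable Act : Type.

(* A labelled Petri net; None as a label stands for the invisible action tau.
   pre s t = F(s,t), post t s = F(t,s). *)
Record net : Type := Net {
  place : Type;
  trans : Type;
  pre : place -> trans -> nat;
  post : trans -> place -> nat;
  M0 : place -> nat;
  lab : trans -> option Act
}.

Definition marking (N : net) := place N -> nat.

(* preset / postset of a finite multiset of transitions (given as a list) *)
Definition preG (N : net) (G : list (trans N)) (s : place N) : nat :=
  fold_right (fun t acc => pre N s t + acc) 0 G.
Definition postG (N : net) (G : list (trans N)) (s : place N) : nat :=
  fold_right (fun t acc => post N t s + acc) 0 G.

Definition fires (N : net) (M : marking N) (G : list (trans N)) (M' : marking N) : Prop :=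
  G <> [] /\ (forall s, preG N G s <= M s) /\
  (forall s, M' s = M s - preG N G s + postG N G s).

Definition enabled (N : net) (M : marking N) (G : list (trans N)) : Prop :=
  G <> [] /\ (forall s, preG N G s <= M s).

Inductive reachable (N : net) : marking N -> Prop :=
| reach_init : reachable N (M0 N)
| reach_step : forall M G M', reachable N M -> fires N M G M' -> reachable N M'.

Definition concurrent (N : net) (t u : trans N) : Prop :=
  exists M, reachable N M /\ enabled N M [t; u].

Definition pre_disjoint (N : net) (t u : trans N) : Prop :=
  forall s, Nat.min (pre N s t) (pre N s u) = 0.

Definition structural_conflict (N : net) : Prop :=
  forall t u, concurrent N t u -> pre_disjoint N t u.

Definition plain (N : net) : Prop :=
  (forall t u, lab N t = lab N u -> t = u) /\ (forall t, lab N t <> None).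

Definition finite_marking (N : net) (M : marking N) : Prop :=
  exists l : list (place N), forall s, M s <> 0 -> In s l.

Definition finitary (N : net) : Prop :=
  (forall t, exists s, pre N s t <> 0) /\
  (forall M, reachable N M ->
     finite_marking N M /\
     exists l : list (trans N), forall t, enabled N M [t] -> In t l).

Definition has_pure_M (N : net) : Prop :=
  exists t u v,
    ~ pre_disjoint N t u /\ ~ pre_disjoint N u v /\ pre_disjoint N t v /\
    exists M, reachable N M /\
      forall s, Nat.max (Nat.max (pre N s t) (pre N s u)) (pre N s v) <= M s.

Definition distributed (N : net) : Prop :=
  exists (Loc : Type) (DS : place N -> Loc) (DT : trans N -> Loc),
    (forall s t, pre N s t <> 0 -> DT t = DS s) /\
    (forall t u, concurrent N t u -> DT t <> DT u).

Definition lstep (N : net) (M : marking N) (a : option Act) (M' : marking N) : Prop :=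
  exists t, lab N t = a /\ fires N M [t] M'.

Definition tau_star (N : net) : relation (marking N) :=
  clos_refl_trans _ (fun M M' => lstep N M None M').

Inductive weak_seq (N : net) : marking N -> list Act -> marking N -> Prop :=
| ws_nil : forall M M', tau_star N M M' -> weak_seq N M [] M'
| ws_cons : forall M M1 M2 M' a sigma,
    tau_star N M M1 -> lstep N M1 (Some a) M2 -> weak_seq N M2 sigma M' ->
    weak_seq N M (a :: sigma) M'.

(* M --A--> for a step A (finite nonempty multiset over Act, given as a list) *)
Definition can_step (N : net) (M : marking N) (A : list Act) : Prop :=
  exists G : list (trans N), enabled N M G /\
    exists la : list Act, map (lab N) G = map (@Some Act) la /\ Permutation la A.

Definition step_failure_pair (N : net) (sigma : list Act) (X : list (list Act)) : Prop :=
  (forall A, In A X -> A <> []) /\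
  exists M, weak_seq N (M0 N) sigma M /\
    (~ exists M', lstep N M None M') /\
    (forall A, In A X -> ~ can_step N M A).

Definition step_failures_eq (N1 N2 : net) : Prop :=
  forall sigma X, step_failure_pair N1 sigma X <-> step_failure_pair N2 sigma X.

End Nets.
Arguments place {Act}.
Arguments trans {Act}.
Arguments pre {Act}.
Arguments post {Act}.
Arguments M0 {Act}.
Arguments lab {Act}.
Arguments marking {Act}.
Arguments preG {Act}.
Arguments postG {Act}.
Arguments fires {Act}.
Arguments enabled {Act}.
Arguments reachable {Act}.
Arguments concurrent {Act}.
Arguments pre_disjoint {Act}.
Arguments structural_conflict {Act}.
Arguments plain {Act}.
Arguments finite_marking {Act}.
Arguments finitary {Act}.
Arguments has_pure_M {Act}.
Arguments distributed {Act}.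
Arguments lstep {Act}.
Arguments tau_star {Act}.
Arguments weak_seq {Act}.
Arguments can_step {Act}.
Arguments step_failure_pair {Act}.
Arguments step_failures_eq {Act}.

Record lts (L : Type) : Type := LTS {
  lstate : Type;
  ltr : lstate -> L -> lstate -> Prop;
  linit : lstate
}.
Arguments lstate {L} _.
Arguments ltr {L} _ _ _ _.
Arguments linit {L} _.

Section Branching.
Variables (L : Type) (tau : L).

Definition ltau_star (A : lts L) : relation (lstate A) :=
  clos_refl_trans _ (fun x y => ltr A x tau y).

Definition half_bbisim_div (A B : lts L) (R : lstate A -> lstate B -> Prop) : Prop :=
  (forall x y a x', R x y -> ltr A x a x' ->
     exists yd y', ltau_star B y yd /\
       (ltr B yd a y' \/ (a = tau /\ yd = y')) /\ R x yd /\ R x' y') /\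
  (forall (x : lstate A) (y : lstate B) (f : nat -> lstate A),
     f 0 = x -> (forall k, ltr A (f k) tau (f (S k))) -> (forall k, R (f k) y) ->
     exists g : nat -> lstate B, g 0 = y /\ (forall l, ltr B (g l) tau (g (S l))) /\
       forall k l, R (f k) (g l)).

Definition bbisim_div (A B : lts L) (R : lstate A -> lstate B -> Prop) : Prop :=
  R (linit A) (linit B) /\ half_bbisim_div A B R /\
  half_bbisim_div B A (fun y x => R x y).

End Branching.

Inductive stlab (Act : Type) : Type :=
| STplus : Act -> stlab Act
| STminus : Act -> nat -> stlab Act (* a^{-n}, n > 0 *)
| STtau : stlab Act.
Arguments STtau {Act}.
Arguments STplus {Act} _.
Arguments STminus {Act} _ _.

Section ST.
Variable Act : Type.

Definition st_marking (N : net Act) : Type := (marking N * list (trans N))%type.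

Inductive st_step (N : net Act) : st_marking N -> stlab Act -> st_marking N -> Prop :=
| st_plus : forall M U t a,
    lab N t = Some a -> enabled N M [t] ->
    st_step N (M, U) (STplus a) (fun s => M s - pre N s t, U ++ [t])
| st_minus : forall M U t a n,
    0 < n -> nth_error U (n - 1) = Some t -> lab N t = Some a ->
    st_step N (M, U) (STminus a n)
      (fun s => M s + post N t s, firstn (n - 1) U ++ skipn n U)
| st_tau : forall M M' U t,
    lab N t = None -> fires N M [t] M' -> st_step N (M, U) STtau (M', U).

Definition st_lts (N : net Act) : lts (stlab Act) :=
  @LTS _ (st_marking N) (st_step N) (M0 N, []).

Definition bSTb_div (N1 N2 : net Act) : Prop :=
  exists R, bbisim_div (stlab Act) STtau (st_lts N1) (st_lts N2) R.

End ST.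
Arguments st_marking {Act} _.
Arguments st_step {Act} _ _ _ _.
Arguments st_lts {Act} _.
Arguments bSTb_div {Act} _ _.

From Stdlib Require Import List Permutation Relations RelationClasses Arith Lia.
From Stdlib Require Import Classical ClassicalEpsilon FunctionalExtensionality PropExtensionality.
Import ListNotations.

(* Only if: a plain net is deterministic, so after a trace to the marking M of a pure M
   (t, u, v labelled a, b, c) it refuses the steps {a,b} and {b,c} and offers {a,c} and
   {b}; a step-failures equivalent net reaches a marking with the same behaviour. There
   the transitions doing a and c are concurrent, hence at different locations, so the
   one doing b is at a location different from one of them; since places are located
   with the transitions consuming them, the two have disjoint presets and form one of
   the refused steps.

   If: without a pure M, overlap of presets is an equivalence on the transitions
   enabled at a reachable marking; its classes are the clusters. The distributed net
   has one location per cluster, which fires a transition of its cluster visibly and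
   reports it to a coordinator; the coordinator tracks the marking of N and, by an
   invisible step, recomputes the clusters, keeping the name of every cluster the
   firing did not touch. Concurrently enabled transitions of N lie in distinct clusters
   and so can start concurrently in D, and D cannot diverge because each invisible step
   consumes a report. *)

Section NetFacts.
Variables (Act : Type) (N : net Act).

Definition enables (M : marking N) (t : trans N) : Prop := forall s, pre N s t <= M s.

Lemma enabled_single M t : enabled N M [t] <-> enables M t.
Proof.
  unfold enabled, enables; simpl; split.
  - intros [_ H] s; specialize (H s); lia.
  - intro H; split; [discriminate|]; intro s; specialize (H s); lia.
Qed.

Lemma enabled_pair M t u : enabled N M [t; u] <-> forall s, pre N s t + pre N s u <= M s.
Proof.
  unfold enabled; simpl; split.
  - intros [_ H] s; specialize (H s); lia.
  - intro H; split; [discriminate|]; intro s; specialize (H s); lia.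
Qed.

Lemma fires_single M t M' :
  fires N M [t] M' <-> enables M t /\ forall s, M' s = M s - pre N s t + post N t s.
Proof.
  unfold fires, enables; simpl; split.
  - intros [_ [H1 H2]]; split; intro s; [specialize (H1 s)|specialize (H2 s)]; lia.
  - intros [H1 H2]; split; [discriminate|split]; intro s;
      [specialize (H1 s)|specialize (H2 s)]; lia.
Qed.

Lemma preG_app l1 l2 s : preG N (l1 ++ l2) s = preG N l1 s + preG N l2 s.
Proof. induction l1; simpl; auto; lia. Qed.

Lemma postG_app l1 l2 s : postG N (l1 ++ l2) s = postG N l1 s + postG N l2 s.
Proof. induction l1; simpl; auto; lia. Qed.

Lemma preG_perm l1 l2 s : Permutation l1 l2 -> preG N l1 s = preG N l2 s.
Proof. induction 1; simpl; lia. Qed.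

Lemma pre_le_preG l t s : In t l -> pre N s t <= preG N l s.
Proof. induction l as [|u l IH]; simpl; [tauto|]. intros [->|H]; [lia|specialize (IH H); lia]. Qed.

Lemma pre_disjoint_sym t u : pre_disjoint N t u -> pre_disjoint N u t.
Proof. intros H s; rewrite Nat.min_comm; apply H. Qed.

Lemma pre_disjoint_zero t u : pre_disjoint N t u -> forall s, pre N s t = 0 \/ pre N s u = 0.
Proof. intros H s; specialize (H s); lia. Qed.

Lemma enabled_pair_disjoint M t u :
  pre_disjoint N t u -> enables M t -> enables M u -> enabled N M [t; u].
Proof.
  intros Htu Ht Hu; apply enabled_pair; intro s.
  destruct (pre_disjoint_zero t u Htu s) as [E|E]; rewrite E;
    [apply Hu|rewrite Nat.add_0_r; apply Ht].
Qed.

Inductive pairwise_disjoint : list (trans N) -> Prop :=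
| pairwise_disjoint_nil : pairwise_disjoint []
| pairwise_disjoint_cons : forall t L, (forall u, In u L -> pre_disjoint N t u) ->
    pairwise_disjoint L -> pairwise_disjoint (t :: L).

Lemma pairwise_disjoint_enabled M L : pairwise_disjoint L ->
  (forall t, In t L -> enables M t) -> forall s, preG N L s <= M s.
Proof.
  induction 1; intros Hen s; simpl; [lia|].
  destruct (Nat.eq_dec (pre N s t) 0) as [E|E].
  - rewrite E; simpl; apply IHpairwise_disjoint; intros; apply Hen; simpl; auto.
  - assert (Hzero : preG N L s = 0).
    { clear IHpairwise_disjoint H0 Hen. induction L as [|u L IH]; simpl; auto.
      destruct (pre_disjoint_zero t u (H u (or_introl eq_refl)) s) as [E'|E'];
        [congruence|].
      rewrite E', IH; auto. intros; apply H; simpl; auto. }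
    rewrite Hzero, Nat.add_0_r. apply Hen; simpl; auto.
Qed.

Inductive reachable_single : marking N -> Prop :=
| reachable_single_init : reachable_single (M0 N)
| reachable_single_step : forall M t M',
    reachable_single M -> fires N M [t] M' -> reachable_single M'.

Lemma reachable_single_fires G : forall M M',
  reachable_single M -> fires N M G M' -> reachable_single M'.
Proof.
  induction G as [|g G IH]; intros M M' HR [HG [H1 H2]]; [congruence|].
  destruct G as [|g' G'].
  - apply reachable_single_step with M g; auto. split; [discriminate|split]; auto.
  - set (M1 := fun s => M s - pre N s g + post N g s).
    apply IH with M1.
    + apply reachable_single_step with M g; auto. apply fires_single. split.
      * intro s; specialize (H1 s); simpl in H1; lia.
      * reflexivity.
    + split; [discriminate|split]; intro s; specialize (H1 s);
        [|specialize (H2 s)]; simpl in *; unfold M1; lia.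
Qed.

Lemma reachable_single_of M : reachable N M -> reachable_single M.
Proof. induction 1; [constructor|eapply reachable_single_fires; eauto]. Qed.

Lemma tau_star_reachable M M' : tau_star N M M' -> reachable N M -> reachable N M'.
Proof. induction 1; auto. destruct H as [t [_ Ht]]; intro; eapply reach_step; eauto. Qed.

Lemma weak_seq_reachable M sigma M' :
  weak_seq N M sigma M' -> reachable N M -> reachable N M'.
Proof.
  induction 1; intro HR; [eapply tau_star_reachable; eauto|].
  apply IHweak_seq. destruct H0 as [t [_ Ht]].
  eapply reach_step; [eapply tau_star_reachable; eauto|exact Ht].
Qed.

Lemma weak_seq_snoc M sigma M1 a M2 :
  weak_seq N M sigma M1 -> lstep N M1 (Some a) M2 -> weak_seq N M (sigma ++ [a]) M2.
Proof.
  induction 1; intro Hl; simpl; econstructor; eauto. constructor; apply rt_refl.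
Qed.

Lemma can_step_pair_inv M a b : can_step N M [a; b] ->
  exists t u a' b', enabled N M [t; u] /\ lab N t = Some a' /\ lab N u = Some b' /\
    ((a' = a /\ b' = b) \/ (a' = b /\ b' = a)).
Proof.
  intros [G [HG [la [Hm Hp]]]].
  pose proof (Permutation_length Hp) as Hl.
  destruct la as [|a' [|b' [|]]]; simpl in Hl; try lia.
  destruct G as [|t [|u [|]]]; simpl in Hm; try discriminate.
  injection Hm; intros Hu Ht.
  exists t, u, a', b'; split; [auto|split; [auto|split; [auto|]]].
  apply Permutation_length_2 in Hp; tauto.
Qed.

Lemma can_step_single_inv M a : can_step N M [a] -> exists t, enables M t /\ lab N t = Some a.
Proof.
  intros [G [HG [la [Hm Hp]]]].
  apply Permutation_sym, Permutation_length_1_inv in Hp; subst.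
  destruct G as [|t [|]]; simpl in Hm; try discriminate.
  injection Hm; intros. exists t; split; auto. apply enabled_single; auto.
Qed.

Lemma can_step_pair M t u a b A : enabled N M [t; u] -> lab N t = Some a -> lab N u = Some b ->
  Permutation [a; b] A -> can_step N M A.
Proof.
  intros. exists [t; u]; split; auto. exists [a; b]; split; auto. simpl; congruence.
Qed.

Lemma can_step_single M t a : enables M t -> lab N t = Some a -> can_step N M [a].
Proof.
  intros. exists [t]; split; [apply enabled_single; auto|].
  exists [a]; split; auto. simpl; congruence.
Qed.

End NetFacts.
Arguments enables {Act N}.
Arguments pairwise_disjoint {Act N}.

Section PlainNets.
Variables (Act : Type) (N : net Act).
Hypothesis Hplain : plain N.

Lemma plain_no_tau M M' : ~ lstep N M None M'.
Proof. intros [t [Hl _]]. exact (proj2 Hplain t Hl). Qed.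

Lemma plain_tau_star M M' : tau_star N M M' -> M' = M.
Proof. induction 1; [exfalso; eapply plain_no_tau; eauto|auto|congruence]. Qed.

Lemma plain_weak_seq_deterministic M sigma M1 :
  weak_seq N M sigma M1 -> forall M2, weak_seq N M sigma M2 -> M1 = M2.
Proof.
  induction 1; intros M2' H2; inversion H2; subst.
  - apply plain_tau_star in H; apply plain_tau_star in H0; congruence.
  - apply plain_tau_star in H; apply plain_tau_star in H5; subst.
    apply IHweak_seq. replace M2 with M4; auto.
    destruct H0 as [t [Ht Hf]]; destruct H7 as [u [Hu Hf']].
    assert (t = u) by (apply (proj1 Hplain); congruence); subst.
    apply fires_single in Hf; apply fires_single in Hf'.
    apply functional_extensionality; intro s.
    rewrite (proj2 Hf s), (proj2 Hf' s); auto.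
Qed.

Lemma plain_reachable_trace M : reachable N M -> exists sigma, weak_seq N (M0 N) sigma M.
Proof.
  intro H. apply reachable_single_of in H. induction H.
  - exists []. constructor; apply rt_refl.
  - destruct IHreachable_single as [sigma Hs].
    destruct (lab N t) as [a|] eqn:E; [|exfalso; exact (proj2 Hplain t E)].
    exists (sigma ++ [a]). eapply weak_seq_snoc; eauto. exists t; auto.
Qed.

Lemma plain_overlap_refuses M t u a b :
  structural_conflict N -> reachable N M -> ~ pre_disjoint N t u ->
  lab N t = Some a -> lab N u = Some b -> ~ can_step N M [a; b].
Proof.
  intros Hsc HM Htu Ht Hu Hc.
  destruct (can_step_pair_inv _ _ _ _ _ Hc) as [t' [u' [a' [b' [He [Ht' [Hu' Hl]]]]]]].
  assert (Hconc : concurrent N t' u') by (exists M; auto).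
  destruct Hl as [[-> ->]|[-> ->]].
  - assert (t' = t) by (apply (proj1 Hplain); congruence).
    assert (u' = u) by (apply (proj1 Hplain); congruence). subst.
    apply Htu, Hsc, Hconc.
  - assert (t' = u) by (apply (proj1 Hplain); congruence).
    assert (u' = t) by (apply (proj1 Hplain); congruence). subst.
    apply Htu, pre_disjoint_sym, Hsc, Hconc.
Qed.

Lemma step_failures_eq_plain_refusal (D : net Act) sigma M X :
  step_failures_eq D N -> weak_seq N (M0 N) sigma M ->
  (forall A, In A X -> A <> []) -> (forall A, In A X -> ~ can_step N M A) ->
  exists MD, reachable D MD /\ (forall A, In A X -> ~ can_step D MD A) /\
    forall A, A <> [] -> can_step N M A -> can_step D MD A.
Proof.
  intros Heq Hsigma HX Href.
  assert (HN : step_failure_pair N sigma X).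
  { split; auto. exists M; repeat split; auto. intros [M' H]; eapply plain_no_tau; eauto. }
  apply Heq in HN. destruct HN as [_ [MD [HMD [HtauD HrefD]]]].
  exists MD; split; [eapply weak_seq_reachable; eauto; constructor|split; auto].
  intros A HA HC. apply NNPP; intro Hn.
  assert (HD : step_failure_pair D sigma (A :: X)).
  { split; [intros A' [<-|]; auto|].
    exists MD; repeat split; auto. intros A' [<-|]; auto. }
  apply Heq in HD. destruct HD as [_ [M' [HM' [_ HrefN]]]].
  rewrite <- (plain_weak_seq_deterministic _ _ _ Hsigma _ HM') in HrefN.
  exact (HrefN A (or_introl eq_refl) HC).
Qed.

End PlainNets.

(* w is located apart from one of the concurrent x, y, and then cannot share an
   input place with it. *)
Lemma distributed_enabled_pair {Act} (D : net Act) M x y w :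
  distributed D -> reachable D M -> enabled D M [x; y] -> enables M w ->
  enabled D M [x; w] \/ enabled D M [y; w].
Proof.
  intros [Loc [DS [DT [Hloc Hconc]]]] HM Hxy Hw.
  assert (Dxy : DT x <> DT y) by (apply Hconc; exists M; auto).
  assert (Hsep : forall z, DT z <> DT w -> enables M z -> enabled D M [z; w]).
  { intros z Hz Hen. apply enabled_pair_disjoint; auto. intro s.
    destruct (Nat.eq_dec (pre D s z) 0) as [E|Ez]; [rewrite E; lia|].
    destruct (Nat.eq_dec (pre D s w) 0) as [E|Ew]; [rewrite E; lia|].
    exfalso; apply Hz; rewrite (Hloc s z Ez), (Hloc s w Ew); auto. }
  rewrite enabled_pair in Hxy.
  destruct (classic (DT x = DT w)) as [E|E].
  - right; apply Hsep; [congruence|intro s; specialize (Hxy s); lia].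
  - left; apply Hsep; [auto|intro s; specialize (Hxy s); lia].
Qed.

Theorem distributable_no_pure_M {Act} (N D : net Act) :
  plain N -> structural_conflict N -> distributed D -> step_failures_eq D N -> ~ has_pure_M N.
Proof.
  intros Hplain Hsc HD Heq [t [u [v [Htu [Huv [Htv [M [HM Hmax]]]]]]]].
  destruct (lab N t) as [a|] eqn:Ea; [|exact (proj2 Hplain t Ea)].
  destruct (lab N u) as [b|] eqn:Eb; [|exact (proj2 Hplain u Eb)].
  destruct (lab N v) as [c|] eqn:Ec; [|exact (proj2 Hplain v Ec)].
  destruct (plain_reachable_trace _ _ Hplain M HM) as [sigma Hsigma].
  assert (Hrefuse : forall A, In A [[a; b]; [b; c]] -> ~ can_step N M A).
  { intros A [<-|[<-|[]]]; [apply (plain_overlap_refuses _ _ Hplain M t u)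
                            |apply (plain_overlap_refuses _ _ Hplain M u v)]; auto. }
  assert (Hnonempty : forall A, In A [[a; b]; [b; c]] -> A <> [])
    by (intros A [<-|[<-|[]]]; discriminate).
  destruct (step_failures_eq_plain_refusal _ _ Hplain D sigma M _ Heq Hsigma Hnonempty Hrefuse)
    as [MD [HMD [HrefD HoffD]]].
  assert (Hac : can_step D MD [a; c]).
  { apply HoffD; [discriminate|]. apply (can_step_pair _ _ M t v a c); auto.
    apply enabled_pair_disjoint; auto; intro s; specialize (Hmax s); lia. }
  assert (Hb : can_step D MD [b]).
  { apply HoffD; [discriminate|]. apply (can_step_single _ _ M u b); auto.
    intro s; specialize (Hmax s); lia. }
  apply can_step_pair_inv in Hac. destruct Hac as [x [y [a' [c' [Hxy [Hx [Hy Hl]]]]]]].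
  apply can_step_single_inv in Hb. destruct Hb as [w [Hw Hlw]].
  assert (Hrefused : forall z l, lab D z = Some l -> (l = a \/ l = c) ->
                     ~ enabled D MD [z; w]).
  { intros z l Hz [->| ->] Hzw.
    - apply (HrefD [a; b]); [left; auto|]. eapply can_step_pair; eauto.
    - apply (HrefD [b; c]); [right; left; auto|]. eapply can_step_pair; eauto.
      apply perm_swap. }
  destruct (distributed_enabled_pair D MD x y w HD HMD Hxy Hw) as [H|H];
    [apply (Hrefused x a')|apply (Hrefused y c')]; auto; tauto.
Qed.

Definition indicator (P : Prop) : nat := if excluded_middle_informative P then 1 else 0.

Lemma indicator_true (P : Prop) : P -> indicator P = 1.
Proof. unfold indicator; destruct (excluded_middle_informative P); tauto. Qed.
Lemma indicator_false (P : Prop) : ~ P -> indicator P = 0.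
Proof. unfold indicator; destruct (excluded_middle_informative P); tauto. Qed.
Lemma indicator_nonzero (P : Prop) : indicator P <> 0 -> P.
Proof. unfold indicator; destruct (excluded_middle_informative P); tauto. Qed.
Lemma indicator_le1 (P : Prop) : indicator P <= 1.
Proof. unfold indicator; destruct (excluded_middle_informative P); lia. Qed.
Lemma indicator_iff (P Q : Prop) : (P <-> Q) -> indicator P = indicator Q.
Proof.
  intro H; destruct (classic P);
    [rewrite !indicator_true|rewrite !indicator_false]; tauto.
Qed.

Lemma nth_error_firstn_skipn {A} (l : list A) k a :
  nth_error l k = Some a -> l = firstn k l ++ a :: skipn (S k) l.
Proof.
  revert k; induction l as [|b l IH]; intros [|k] H; simpl in *; try discriminate.
  - injection H; intros; subst; auto.
  - f_equal; apply IH; auto.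
Qed.

Section Distribution.
Variables (Act : Type) (N : net Act).
Hypothesis Hpre : forall t, exists s, pre N s t <> 0.
Hypothesis Hvisible : forall t, lab N t <> None.
Hypothesis Hsc : structural_conflict N.
Hypothesis HnoM : ~ has_pure_M N.

Definition overlap (t u : trans N) : Prop := ~ pre_disjoint N t u.

(* Without a pure M this is an equivalence on the transitions enabled at a reachable
   marking; its classes are the clusters. *)
Definition conflict (M : marking N) (t u : trans N) : Prop :=
  enables M t /\ enables M u /\ overlap t u.

Lemma overlap_refl t : overlap t t.
Proof.
  intro H. destruct (Hpre t) as [s Hs]. specialize (H s). rewrite Nat.min_id in H. auto.
Qed.

Lemma overlap_sym t u : overlap t u -> overlap u t.
Proof. intros H H'; apply H, pre_disjoint_sym, H'. Qed.

Lemma conflict_refl M t : enables M t -> conflict M t t.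
Proof. intro; repeat split; auto; apply overlap_refl. Qed.

Lemma conflict_sym M t u : conflict M t u -> conflict M u t.
Proof. intros [? [? ?]]; repeat split; auto; apply overlap_sym; auto. Qed.

Lemma conflict_trans M t u v : reachable N M -> conflict M t u -> conflict M u v -> conflict M t v.
Proof.
  intros HR [Ht [Hu Htu]] [_ [Hv Huv]]. repeat split; auto.
  intro Htv. apply HnoM. exists t, u, v. repeat split; auto.
  exists M; split; auto. intro s; specialize (Ht s); specialize (Hu s); specialize (Hv s); lia.
Qed.

Lemma conflict_enables M t u : conflict M t u -> enables M u.
Proof. intros [_ [H _]]; auto. Qed.

Lemma overlap_not_concurrent M t u :
  reachable N M -> overlap t u -> ~ (forall s, pre N s t + pre N s u <= M s).
Proof.
  intros HR Hov H. apply Hov, Hsc. exists M; split; auto. apply enabled_pair; auto.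
Qed.

Lemma conflict_class_eq M w w' x : reachable N M ->
  conflict M w x -> conflict M w' x -> conflict M w = conflict M w'.
Proof.
  intros HR Hw Hw'.
  assert (Hww' : conflict M w w') by (eapply conflict_trans; eauto; apply conflict_sym; auto).
  apply functional_extensionality; intro y. apply propositional_extensionality.
  split; intro H; [apply (conflict_trans M w' w y)|apply (conflict_trans M w w' y)]; auto.
  apply conflict_sym; auto.
Qed.

Lemma conflict_class_overlap M w c c' : reachable N M ->
  conflict M w c -> conflict M w c' -> overlap c c'.
Proof.
  intros HR Hc Hc'. assert (H : conflict M c c')
    by (apply (conflict_trans M c w c' HR); auto; apply conflict_sym; auto).
  apply H.
Qed.

(* A cluster is named by its creation time and its extent at creation; a cluster
   untouched by a firing keeps its name even though its extent may shrink. *)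
Definition cluster_id : Type := (nat * (trans N -> Prop))%type.

Record coordinator : Type := Coordinator {
  cmark : marking N;
  clock : nat;
  live : cluster_id -> Prop
}.

Definition in_cluster (X : coordinator) (j : cluster_id) (x : trans N) : Prop :=
  exists c, snd j c /\ conflict (cmark X) c x.

Definition after (X : coordinator) (t : trans N) : marking N :=
  fun s => cmark X s - pre N s t + post N t s.

Definition fresh_cluster (X : coordinator) (t : trans N) (j : cluster_id)
    (C : trans N -> Prop) : Prop :=
  exists w, enables (after X t) w /\ C = conflict (after X t) w /\
    forall i c, live X i -> i <> j -> snd i c -> ~ conflict (after X t) c w.

Definition coord_step (X : coordinator) (t : trans N) (j : cluster_id) : coordinator :=
  Coordinator (after X t) (S (clock X))
    (fun i => (live X i /\ i <> j) \/ (fst i = S (clock X) /\ fresh_cluster X t j (snd i))).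

Definition coord_init : coordinator :=
  Coordinator (M0 N) 0
    (fun j => fst j = 0 /\ exists w, enables (M0 N) w /\ snd j = conflict (M0 N) w).

Record coord_wf (X : coordinator) : Prop := {
  wf_reachable : reachable N (cmark X);
  wf_clock : forall j, live X j -> fst j <= clock X;
  wf_enables : forall j c, live X j -> snd j c -> enables (cmark X) c;
  wf_cover : forall x, enables (cmark X) x -> exists j, live X j /\ in_cluster X j x;
  wf_unique : forall i j x, live X i -> live X j -> in_cluster X i x -> in_cluster X j x -> i = j;
  wf_overlap : forall j c c', live X j -> snd j c -> snd j c' -> overlap c c'
}.

Lemma in_cluster_enables X j x : in_cluster X j x -> enables (cmark X) x.
Proof. intros [c [_ H]]; eapply conflict_enables; eauto. Qed.

Lemma in_cluster_closed X j x y :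
  reachable N (cmark X) -> in_cluster X j x -> conflict (cmark X) x y -> in_cluster X j y.
Proof. intros HR [c [Hc H]] H'. exists c; split; auto. eapply conflict_trans; eauto. Qed.

Lemma in_cluster_seed X j c : coord_wf X -> live X j -> snd j c -> in_cluster X j c.
Proof. intros HX Hj Hc. exists c; split; auto. apply conflict_refl. eapply wf_enables; eauto. Qed.

Lemma in_cluster_conflict X j x y : coord_wf X -> live X j ->
  in_cluster X j x -> in_cluster X j y -> conflict (cmark X) x y.
Proof.
  intros HX Hj [c [Hc Hcx]] [c' [Hc' Hcy]].
  assert (HR := wf_reachable _ HX).
  assert (Hcc : conflict (cmark X) c c')
    by (repeat split;
        [apply (wf_enables _ HX j)|apply (wf_enables _ HX j)|apply (wf_overlap _ HX j)]; auto).
  apply (conflict_trans _ x c y HR); [apply conflict_sym; auto|].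
  apply (conflict_trans _ c c' y HR); auto.
Qed.

Lemma clusters_disjoint X i j x y : coord_wf X -> live X i -> live X j -> i <> j ->
  in_cluster X i x -> in_cluster X j y -> pre_disjoint N x y.
Proof.
  intros HX Hi Hj Hij Hx Hy. apply NNPP; intro Hov.
  apply Hij, (wf_unique _ HX i j y); auto.
  apply in_cluster_closed with x; auto; [apply wf_reachable; auto|].
  repeat split; [eapply in_cluster_enables; eauto|eapply in_cluster_enables; eauto|exact Hov].
Qed.

Lemma clusters_concurrent X i j x y : coord_wf X -> live X i -> live X j -> i <> j ->
  in_cluster X i x -> in_cluster X j y -> forall s, pre N s x + pre N s y <= cmark X s.
Proof.
  intros HX Hi Hj Hij Hx Hy. apply enabled_pair, enabled_pair_disjoint.
  - apply (clusters_disjoint X i j); auto.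
  - eapply in_cluster_enables; eauto.
  - eapply in_cluster_enables; eauto.
Qed.

Section CoordStep.
Variables (X : coordinator) (t : trans N) (id : cluster_id).
Hypothesis HX : coord_wf X.
Hypothesis Hid : live X id.
Hypothesis Ht : in_cluster X id t.

Lemma after_enables j x : live X j -> j <> id -> in_cluster X j x -> enables (after X t) x.
Proof.
  intros Hj Hne Hx s. pose proof (clusters_concurrent X j id x t HX Hj Hid Hne Hx Ht s).
  unfold after. lia.
Qed.

Lemma after_reachable : reachable N (after X t).
Proof.
  eapply reach_step; [apply (wf_reachable _ HX)|]. apply fires_single.
  split; [apply (in_cluster_enables X id t Ht)|reflexivity].
Qed.

Lemma in_cluster_step j x :
  live X j -> j <> id -> in_cluster X j x -> in_cluster (coord_step X t id) j x.
Proof.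
  intros Hj Hne [c [Hc Hcx]]. exists c; split; auto. simpl. repeat split.
  - apply (after_enables j c); auto. apply in_cluster_seed; auto.
  - apply (after_enables j x); auto. exists c; auto.
  - apply Hcx.
Qed.

Lemma coord_step_unique : forall i j x,
  live (coord_step X t id) i -> live (coord_step X t id) j ->
  in_cluster (coord_step X t id) i x -> in_cluster (coord_step X t id) j x -> i = j.
Proof.
  pose proof after_reachable as HR.
  intros i j x Hi Hj [ci [Hci Hcix]] [cj [Hcj Hcjx]]. simpl in *.
  destruct Hi as [[Hi Hnei]|[Hfi [wi [Hwi [HCi Hni]]]]];
  destruct Hj as [[Hj Hnej]|[Hfj [wj [Hwj [HCj Hnj]]]]].
  - apply (wf_unique _ HX i j cj); [auto|auto| |apply in_cluster_seed; auto].
    exists ci; split; auto.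
    assert (H : conflict (after X t) ci cj)
      by (eapply conflict_trans; eauto; apply conflict_sym; auto).
    repeat split; [apply (wf_enables _ HX i)|apply (wf_enables _ HX j)|apply H]; auto.
  - exfalso. rewrite HCj in Hcj. apply (Hnj i ci Hi Hnei Hci).
    apply (conflict_trans _ ci x wj HR Hcix), conflict_sym, (conflict_trans _ wj cj x HR Hcj Hcjx).
  - exfalso. rewrite HCi in Hci. apply (Hni j cj Hj Hnej Hcj).
    apply (conflict_trans _ cj x wi HR Hcjx), conflict_sym, (conflict_trans _ wi ci x HR Hci Hcix).
  - rewrite HCi in Hci. rewrite HCj in Hcj. destruct i as [ni Ci], j as [nj Cj]; simpl in *.
    subst. f_equal. apply (conflict_class_eq _ _ _ x HR); eapply conflict_trans; eauto.
Qed.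

Lemma coord_step_wf : coord_wf (coord_step X t id).
Proof.
  pose proof after_reachable as HR.
  constructor; simpl.
  - exact HR.
  - intros j [[Hj _]|[Hj _]]; [pose proof (wf_clock _ HX j Hj)|]; lia.
  - intros j c [[Hj Hne]|[_ [w [Hw [HC _]]]]] Hc.
    + apply (after_enables j c); auto. apply in_cluster_seed; auto.
    + rewrite HC in Hc. eapply conflict_enables; eauto.
  - intros x Hx.
    destruct (classic (exists j c, live X j /\ j <> id /\ snd j c /\ conflict (after X t) c x))
      as [[j [c [Hj [Hne [Hc Hcx]]]]]|Hn].
    + exists j; split; [left; auto|]. exists c; auto.
    + exists (S (clock X), conflict (after X t) x). split.
      * right; split; auto. exists x; repeat split; auto.
        intros j c Hj Hne Hc Hcx. apply Hn; exists j, c; auto.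
      * exists x; split; apply conflict_refl; auto.
  - exact coord_step_unique.
  - intros j c c' [[Hj _]|[_ [w [_ [HC _]]]]] Hc Hc'.
    + apply (wf_overlap _ HX j); auto.
    + rewrite HC in Hc, Hc'. eapply conflict_class_overlap; eauto.
Qed.

End CoordStep.

Lemma coord_init_wf : coord_wf coord_init.
Proof.
  assert (HR : reachable N (M0 N)) by constructor.
  constructor; simpl.
  - exact HR.
  - intros j [H _]; lia.
  - intros j c [_ [w [Hw HC]]] Hc. rewrite HC in Hc. eapply conflict_enables; eauto.
  - intros x Hx. exists (0, conflict (M0 N) x). split.
    + split; auto. exists x; auto.
    + exists x; split; apply conflict_refl; auto.
  - intros [ni Ci] [nj Cj] x [Hfi [wi [Hwi HCi]]] [Hfj [wj [Hwj HCj]]]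
      [ci [Hci Hcix]] [cj [Hcj Hcjx]].
    simpl in *. subst. f_equal. apply (conflict_class_eq _ _ _ x HR); eapply conflict_trans; eauto.
  - intros j c c' [_ [w [_ HC]]] Hc Hc'. rewrite HC in Hc, Hc'.
    eapply conflict_class_overlap; eauto.
Qed.

(* Each cluster j is a location holding the token
   [Ptoken j] and an offer [Poffer j w] for each transition w of the cluster; the
   visible transition [Tfire t j] consumes both and leaves the message [Pdone t j],
   which the coordinator, a separate location marking [Pcoord X], processes by the
   invisible transition [Tcoord X t j]. *)
Inductive dplace : Type :=
| Pcoord (X : coordinator)
| Pdone (t : trans N) (j : cluster_id)
| Ptoken (j : cluster_id)
| Poffer (j : cluster_id) (w : trans N).

Inductive dtrans : Type :=
| Tfire (t : trans N) (j : cluster_id)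
| Tcoord (X : coordinator) (t : trans N) (j : cluster_id).

Definition dpre (s : dplace) (r : dtrans) : nat :=
  match r, s with
  | Tfire t j, Ptoken j' => indicator (j' = j)
  | Tfire t j, Poffer j' w => indicator (j' = j /\ w = t)
  | Tcoord X t j, Pcoord Y => indicator (Y = X)
  | Tcoord X t j, Pdone t' j' => indicator (t' = t /\ j' = j)
  | _, _ => 0
  end.

Definition dpost (r : dtrans) (s : dplace) : nat :=
  match r, s with
  | Tfire t j, Pdone t' j' => indicator (t' = t /\ j' = j)
  | Tcoord X t j, Pcoord Y => indicator (Y = coord_step X t j)
  | Tcoord X t j, Ptoken j' => indicator (live (coord_step X t j) j' /\ ~ live X j')
  | Tcoord X t j, Poffer j' w =>
      indicator (live (coord_step X t j) j' /\ in_cluster (coord_step X t j) j' w /\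
                 ~ (live X j' /\ in_cluster X j' w))
  | _, _ => 0
  end.

Definition dinit (s : dplace) : nat :=
  match s with
  | Pcoord Y => indicator (Y = coord_init)
  | Ptoken j => indicator (live coord_init j)
  | Poffer j w => indicator (live coord_init j /\ in_cluster coord_init j w)
  | Pdone _ _ => 0
  end.

Definition dlab (r : dtrans) : option Act :=
  match r with Tfire t _ => lab N t | Tcoord _ _ _ => None end.

Definition D : net Act := Net Act dplace dtrans dpre dpost dinit dlab.

Lemma coord_step_neq X t j : coord_step X t j <> X.
Proof.
  intro H. assert (E : clock (coord_step X t j) = clock X) by (rewrite H; auto).
  simpl in E; lia.
Qed.

Definition token_invariant (M : marking D) : Prop :=
  exists X, M (Pcoord X) = 1 /\ (forall Y, Y <> X -> M (Pcoord Y) = 0) /\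
    (forall j, M (Ptoken j) <= 1) /\ (forall j, clock X < fst j -> M (Ptoken j) = 0).

Lemma reachable_token_invariant M : reachable D M -> token_invariant M.
Proof.
  intro HM; apply reachable_single_of in HM. induction HM.
  - exists coord_init. simpl. repeat split.
    + apply indicator_true; auto.
    + intros; apply indicator_false; auto.
    + intro; apply indicator_le1.
    + intros j Hj. apply indicator_false. intros [H' _]. lia.
  - destruct IHHM as [X [H1 [H2 [H3 H4]]]].
    apply fires_single in H. destruct H as [Hen Hf]. unfold enables in Hen; simpl in Hen, Hf.
    destruct t as [t j|Y t j].
    + exists X. repeat split.
      * rewrite Hf; simpl; lia.
      * intros Y HY; rewrite Hf; simpl; rewrite H2; auto.
      * intro j'; rewrite Hf; simpl; specialize (H3 j'); lia.
      * intros j' Hj'; rewrite Hf; simpl; rewrite H4; auto.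
    + assert (Y = X).
      { specialize (Hen (Pcoord Y)); simpl in Hen. rewrite indicator_true in Hen; auto.
        apply NNPP; intro Hn; rewrite H2 in Hen; auto; lia. }
      subst Y. exists (coord_step X t j). repeat split.
      * rewrite Hf; simpl. rewrite H2 by apply coord_step_neq.
        rewrite (indicator_true (coord_step X t j = coord_step X t j)) by auto.
        rewrite (indicator_false (coord_step X t j = X)) by apply coord_step_neq. lia.
      * intros Z HZ; rewrite Hf; simpl. rewrite (indicator_false (Z = coord_step X t j)) by auto.
        destruct (classic (Z = X)) as [->|HZX];
          [rewrite H1, indicator_true|rewrite H2, indicator_false]; auto.
      * intro j'; rewrite Hf; simpl. unfold indicator.
        destruct (excluded_middle_informative _) as [[[[Ho _]|[Hs _]] Hno]|]; [tauto| |].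
        -- rewrite H4 by lia. lia.
        -- specialize (H3 j'); lia.
      * intros j' Hj'; rewrite Hf; simpl in *. rewrite H4 by lia.
        rewrite indicator_false; [lia|]. intros [[[Ho _]|[Hs _]] Hno]; [tauto|lia].
Qed.

Theorem D_distributed : distributed D.
Proof.
  exists (option cluster_id).
  exists (fun s => match s with Ptoken j | Poffer j _ => Some j | _ => None end).
  exists (fun r => match r with Tfire _ j => Some j | Tcoord _ _ _ => None end).
  split.
  - intros s r H. destruct r as [t j|X t j]; destruct s; simpl in H; try lia;
      apply indicator_nonzero in H; try destruct H; subst; auto.
  - intros r1 r2 [M [HR Hen]] Heq. rewrite enabled_pair in Hen. simpl in Hen.
    destruct (reachable_token_invariant M HR) as [X [H1 [H2 [H3 H4]]]].
    destruct r1 as [t1 j1|X1 t1 j1]; destruct r2 as [t2 j2|X2 t2 j2]; try discriminate.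
    + injection Heq; intros; subst. specialize (Hen (Ptoken j2)); specialize (H3 j2); simpl in Hen.
      rewrite !indicator_true in Hen; auto; lia.
    + assert (Hat : forall Y, 1 <= M (Pcoord Y) -> Y = X)
        by (intros Y HY; apply NNPP; intro; rewrite H2 in HY; auto; lia).
      specialize (Hen (Pcoord X1)) as E1. simpl in E1. rewrite indicator_true in E1 by auto.
      destruct (classic (X1 = X2)) as [<-|Hne].
      * rewrite indicator_true in E1 by auto. rewrite (Hat X1) in E1 by lia. lia.
      * specialize (Hen (Pcoord X2)) as E2. simpl in E2.
        rewrite (indicator_true (X2 = X2)) in E2 by auto.
        apply Hne. rewrite (Hat X1), (Hat X2); auto; lia.
Qed.

Definition msg_count (p : trans N * cluster_id) (E : list (trans N * cluster_id)) : nat :=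
  fold_right (fun q acc => indicator (q = p) + acc) 0 E.

Lemma msg_count_app p l1 l2 : msg_count p (l1 ++ l2) = msg_count p l1 + msg_count p l2.
Proof. induction l1; simpl; auto; lia. Qed.

Lemma msg_count_In p E : 1 <= msg_count p E -> In p E.
Proof.
  induction E as [|q E IH]; simpl; [lia|]. intro H.
  destruct (classic (q = p)); auto. rewrite indicator_false in H; auto.
Qed.

Definition dfire (p : trans N * cluster_id) : dtrans := Tfire (fst p) (snd p).

Definition cluster_assignment (X : coordinator) (P : list (trans N * cluster_id)) : Prop :=
  (forall p, In p P -> live X (snd p) /\ in_cluster X (snd p) (fst p)) /\ NoDup (map snd P).

Lemma cluster_assignment_perm X P P' :
  Permutation P P' -> cluster_assignment X P -> cluster_assignment X P'.
Proof.
  intros Hp [H1 H2]; split.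
  - intros p Hin; apply H1; eapply Permutation_in; [apply Permutation_sym|]; eauto.
  - eapply Permutation_NoDup; [apply Permutation_map|]; eauto.
Qed.

Lemma cluster_assignment_disjoint X P : coord_wf X -> cluster_assignment X P ->
  pairwise_disjoint (map fst P).
Proof.
  intros HX [H1 H2]. induction P as [|p P IH]; simpl; constructor.
  - intros u Hu. apply in_map_iff in Hu. destruct Hu as [q [<- Hq]].
    simpl in H2. apply NoDup_cons_iff in H2. destruct H2 as [Hn _].
    destruct (H1 p (or_introl eq_refl)) as [Op Kp]. destruct (H1 q (or_intror Hq)) as [Oq Kq].
    apply (clusters_disjoint X (snd p) (snd q)); auto.
    intro E; apply Hn. rewrite E; apply in_map; auto.
  - apply IH; [intros; apply H1; simpl; auto|].
    simpl in H2; apply NoDup_cons_iff in H2; tauto.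
Qed.

Lemma cluster_assignment_bound X P : coord_wf X -> cluster_assignment X P ->
  forall s, preG N (map fst P) s <= cmark X s.
Proof.
  intros HX HP. apply pairwise_disjoint_enabled; [eapply cluster_assignment_disjoint; eauto|].
  intros t Ht. apply in_map_iff in Ht. destruct Ht as [p [<- Hp]].
  destruct HP as [H1 _]. destruct (H1 p Hp) as [_ Kp]. eapply in_cluster_enables; eauto.
Qed.

Record dmarking_wf (X : coordinator) (P E : list (trans N * cluster_id)) (Md : marking D) :
    Prop := {
  dm_coord : Md (Pcoord X) = 1;
  dm_coord_other : forall Y, Y <> X -> Md (Pcoord Y) = 0;
  dm_done : forall t j, Md (Pdone t j) = msg_count (t, j) E;
  dm_token : forall j, Md (Ptoken j) = indicator (live X j /\ ~ In j (map snd P));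
  dm_offer : forall j w, live X j -> ~ In j (map snd P) -> in_cluster X j w -> 1 <= Md (Poffer j w);
  dm_offer_in : forall j w, live X j -> 1 <= Md (Poffer j w) -> in_cluster X j w;
  dm_offer_future : forall j w, clock X < fst j -> Md (Poffer j w) = 0
}.

Lemma dmarking_wf_perm X P P' E Md :
  Permutation P P' -> dmarking_wf X P E Md -> dmarking_wf X P' E Md.
Proof.
  intros Hp H.
  assert (Hi : forall j, In j (map snd P) <-> In j (map snd P')).
  { intro j; split; apply Permutation_in; [|apply Permutation_sym]; apply Permutation_map; auto. }
  destruct H; constructor; auto.
  - intro j; rewrite dm_token0; apply indicator_iff. rewrite Hi; tauto.
  - intros j w Ho Hn; apply dm_offer0; auto; rewrite Hi; auto.
Qed.

(* U: transitions started but not terminated, in ST order; E: terminated transitions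
   whose message the coordinator has not yet processed. *)
Definition st_related X U E (x : st_marking D) (y : st_marking N) : Prop :=
  coord_wf X /\ cluster_assignment X (U ++ E) /\ dmarking_wf X (U ++ E) E (fst x) /\
  snd x = map dfire U /\ snd y = map fst U /\
  forall s, fst y s = cmark X s + postG N (map fst E) s - preG N (map fst (U ++ E)) s.

Lemma dmarking_wf_start X P E Md w id : live X id -> ~ In id (map snd P) ->
  dmarking_wf X P E Md -> dmarking_wf X ((w, id) :: P) E (fun s => Md s - dpre s (Tfire w id)).
Proof.
  intros Hid Hnin HM. destruct HM; constructor; intros; simpl in *.
  - rewrite Nat.sub_0_r; auto.
  - rewrite Nat.sub_0_r; auto.
  - rewrite Nat.sub_0_r; auto.
  - rewrite dm_token0. destruct (classic (j = id)) as [->|Hne].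
    + rewrite (indicator_true (id = id)) by auto.
      rewrite (indicator_false (live X id /\ ~ (id = id \/ _))) by tauto.
      rewrite indicator_true; auto.
    + rewrite (indicator_false (j = id)), Nat.sub_0_r by auto. apply indicator_iff. intuition.
  - rewrite indicator_false by (intros [E1 _]; apply H0; subst; left; reflexivity).
    rewrite Nat.sub_0_r. apply dm_offer0; auto.
  - apply dm_offer_in0; auto. lia.
  - rewrite dm_offer_future0; auto.
Qed.

Lemma st_related_start X U E Md Ud Mn Un w id :
  st_related X U E (Md, Ud) (Mn, Un) -> enables Md (Tfire w id) ->
  enables Mn w /\
  st_related X (U ++ [(w, id)]) E (fun s => Md s - dpre s (Tfire w id), Ud ++ [Tfire w id])
     (fun s => Mn s - pre N s w, Un ++ [w]).
Proof.
  intros [HX [HP [HM [HUd [HUn HMn]]]]] Hen; simpl in *.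
  assert (Hg := Hen (Ptoken id)); simpl in Hg.
  rewrite indicator_true, (dm_token _ _ _ _ HM) in Hg by auto.
  assert (Hid : live X id /\ ~ In id (map snd (U ++ E))) by (apply indicator_nonzero; lia).
  destruct Hid as [Hid Hnin].
  assert (Ha := Hen (Poffer id w)); simpl in Ha. rewrite indicator_true in Ha by auto.
  assert (Kw := dm_offer_in _ _ _ _ HM id w Hid Ha).
  assert (HP' : cluster_assignment X ((w, id) :: U ++ E)).
  { destruct HP as [H1 H2]; split; [intros p [<-|Hp]; auto|simpl; apply NoDup_cons_iff; auto]. }
  assert (Hperm : Permutation ((w, id) :: U ++ E) ((U ++ [(w, id)]) ++ E)).
  { rewrite <- app_assoc. simpl. apply Permutation_middle. }
  pose proof (cluster_assignment_bound X _ HX HP') as Hb. simpl in Hb.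
  split; [intro s; rewrite HMn; specialize (Hb s); lia|].
  split; [auto|split; [|split; [|split; [|split]]]].
  - eapply cluster_assignment_perm; eauto.
  - apply dmarking_wf_perm with ((w, id) :: U ++ E); auto. apply dmarking_wf_start; auto.
  - simpl. rewrite HUd, map_app; auto.
  - simpl. rewrite HUn, map_app; auto.
  - intro s. simpl. rewrite HMn, !map_app, !preG_app. simpl. lia.
Qed.

Lemma dmarking_wf_finish X P E Md t id :
  dmarking_wf X P E Md -> dmarking_wf X P ((t, id) :: E) (fun s => Md s + dpost (Tfire t id) s).
Proof.
  intro HM. destruct HM; constructor; intros; simpl in *; try (rewrite Nat.add_0_r; auto).
  - rewrite dm_done0, Nat.add_comm. f_equal. apply indicator_iff.
    split; [intros [-> ->]; auto|intro H; injection H; auto].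
  - apply dm_offer_in0; auto. lia.
Qed.

Lemma st_related_finish X U E Md Ud Mn Un k r :
  st_related X U E (Md, Ud) (Mn, Un) -> nth_error Ud k = Some r ->
  exists t id, r = Tfire t id /\ nth_error Un k = Some t /\
  st_related X (firstn k U ++ skipn (S k) U) ((t, id) :: E)
     (fun s => Md s + dpost r s, firstn k Ud ++ skipn (S k) Ud)
     (fun s => Mn s + post N t s, firstn k Un ++ skipn (S k) Un).
Proof.
  intros [HX [HP [HM [HUd [HUn HMn]]]]] Hr; cbn [fst snd] in *.
  rewrite HUd, nth_error_map in Hr.
  destruct (nth_error U k) as [[t id]|] eqn:Ek; simpl in Hr; [|discriminate].
  injection Hr; intros <-. exists t, id. split; [reflexivity|split].
  { rewrite HUn, nth_error_map, Ek; reflexivity. }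
  pose proof (nth_error_firstn_skipn U k _ Ek) as Hsp.
  set (U1 := firstn k U) in *. set (U2 := skipn (S k) U) in *.
  assert (Hperm : Permutation (U ++ E) ((U1 ++ U2) ++ (t, id) :: E)).
  { rewrite Hsp at 1. rewrite <- !app_assoc. simpl.
    apply Permutation_app_head, Permutation_middle. }
  pose proof (cluster_assignment_bound X _ HX HP) as Hb.
  split; [auto|split; [|split; [|split; [|split]]]].
  - eapply cluster_assignment_perm; eauto.
  - apply dmarking_wf_perm with (U ++ E); auto. apply dmarking_wf_finish; auto.
  - cbn [snd]. rewrite HUd, firstn_map, skipn_map, map_app; auto.
  - cbn [snd]. rewrite HUn, firstn_map, skipn_map, map_app; auto.
  - intro s. simpl. rewrite HMn.
    rewrite (preG_perm _ _ (map fst ((U1 ++ U2) ++ (t, id) :: E)) (map fst (U ++ E)));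
      [|apply Permutation_map, Permutation_sym; auto].
    specialize (Hb s). simpl. lia.
Qed.

Lemma coord_step_not_live X t id : coord_wf X -> live X id -> ~ live (coord_step X t id) id.
Proof.
  simpl; intros HX Hid [[_ H]|[H _]]; [auto|]. pose proof (wf_clock _ HX id Hid); lia.
Qed.

Lemma dmarking_wf_process X P E1 E2 t id Md :
  coord_wf X -> cluster_assignment X ((t, id) :: P) ->
  dmarking_wf X ((t, id) :: P) (E1 ++ (t, id) :: E2) Md ->
  dmarking_wf (coord_step X t id) P (E1 ++ E2)
    (fun s => Md s - dpre s (Tcoord X t id) + dpost (Tcoord X t id) s).
Proof.
  intros HX [HPin HPnd] HM. simpl in HPnd. apply NoDup_cons_iff in HPnd. destruct HPnd as [Hnin _].
  destruct (HPin (t, id) (or_introl eq_refl)) as [Hid Ht]; simpl in Hid, Ht.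
  assert (HX' := coord_step_wf X t id HX Hid Ht).
  assert (Hnid := coord_step_not_live X t id HX Hid).
  assert (HPlive : forall j, In j (map snd P) -> live X j /\ j <> id).
  { intros j Hj. split; [|intro; subst; auto].
    apply in_map_iff in Hj; destruct Hj as [p [<- Hp]]. apply (HPin p); simpl; auto. }
  destruct HM. constructor; intros; simpl in *.
  - rewrite dm_coord_other0 by apply coord_step_neq.
    rewrite (indicator_false (coord_step X t id = X)), indicator_true
      by (auto; apply coord_step_neq).
    auto.
  - rewrite (indicator_false (Y = coord_step X t id)) by auto.
    destruct (classic (Y = X)) as [->|];
      [rewrite dm_coord0, indicator_true|rewrite dm_coord_other0, indicator_false]; auto.
  - rewrite dm_done0, !msg_count_app. simpl.
    rewrite (indicator_iff ((t, id) = (t0, j)) (t0 = t /\ j = id)); [lia|].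
    split; [intro H; injection H; auto|intros [-> ->]; auto].
  - rewrite dm_token0. destruct (classic (live X j)) as [Ho|Ho].
    + rewrite (indicator_false (_ /\ ~ live X j)) by tauto.
      destruct (classic (j = id)) as [->|Hne].
      * rewrite (indicator_false (live X id /\ _)) by tauto.
        rewrite (indicator_false (_ /\ ~ In id _)) by (intros [H _]; apply Hnid; exact H).
        reflexivity.
      * rewrite Nat.sub_0_r, Nat.add_0_r. apply indicator_iff. intuition.
    + rewrite (indicator_false (live X j /\ _)) by tauto. simpl. apply indicator_iff.
      split; [intros [H1 H2]; split; auto; intro H3; apply H2, (HPlive j H3)|tauto].
  - unfold indicator. destruct (excluded_middle_informative _) as [|Hn]; [lia|].
    assert (Hok : live X j /\ in_cluster X j w) by (apply NNPP; intro Hc; apply Hn; tauto).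
    destruct Hok as [Ho Hk].
    assert (j <> id) by (intro; subst; auto).
    assert (1 <= Md (Poffer j w)); [|lia]. apply dm_offer0; auto. intros [->|Hin]; auto.
  - unfold indicator in H0. destruct (excluded_middle_informative _) as [Hy|Hn]; [tauto|].
    destruct (classic (live X j)) as [Ho|Ho].
    + assert (j <> id) by (intro; subst; auto). apply in_cluster_step; auto.
      apply dm_offer_in0; auto. lia.
    + exfalso. destruct H as [[H _]|[H _]]; [auto|]. rewrite dm_offer_future0 in H0; lia.
  - rewrite dm_offer_future0 by lia. rewrite indicator_false; auto. intros [Ho _].
    pose proof (wf_clock _ HX' j Ho); simpl in *; lia.
Qed.

Lemma st_related_process X U E1 E2 t id Md Ud y :
  st_related X U (E1 ++ (t, id) :: E2) (Md, Ud) y ->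
  st_related (coord_step X t id) U (E1 ++ E2)
     (fun s => Md s - dpre s (Tcoord X t id) + dpost (Tcoord X t id) s, Ud) y.
Proof.
  intros [HX [HP [HM [HUd [HUn HMn]]]]]; cbn [fst snd] in *.
  set (E := E1 ++ (t, id) :: E2) in *. set (P := U ++ E1 ++ E2).
  assert (Hperm : Permutation (U ++ E) ((t, id) :: P)).
  { unfold E, P. apply Permutation_sym.
    rewrite (app_assoc U E1 E2), (app_assoc U E1 ((t, id) :: E2)). apply Permutation_middle. }
  assert (HP2 : cluster_assignment X ((t, id) :: P)) by (eapply cluster_assignment_perm; eauto).
  pose proof HP2 as [HPin HPnd]. simpl in HPnd.
  apply NoDup_cons_iff in HPnd. destruct HPnd as [Hnin HPnd].
  destruct (HPin (t, id) (or_introl eq_refl)) as [Hid Ht]; simpl in Hid, Ht.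
  pose proof (cluster_assignment_bound X _ HX HP) as Hb.
  split; [apply coord_step_wf; auto|split; [|split; [|split; [|split]]]]; auto.
  - split; auto. intros p Hp. destruct (HPin p (or_intror Hp)) as [Hop Hkp].
    assert (snd p <> id) by (intro E0; apply Hnin; rewrite <- E0; apply in_map; auto).
    split; [left; auto|]. apply in_cluster_step; auto.
  - apply dmarking_wf_process; auto. eapply dmarking_wf_perm; eauto.
  - intro s. rewrite HMn. simpl. unfold E, P in *. specialize (Hb s).
    rewrite !map_app, !postG_app, !preG_app in *. simpl in *. unfold after. lia.
Qed.

Lemma st_related_tau_inv X U E x y x' :
  st_related X U E x y -> st_step D x STtau x' ->
  exists X' E', length E' < length E /\ st_related X' U E' x' y.
Proof.
  intros HR Hs. inversion Hs; subst.
  pose proof HR as [HX [HP [HM _]]]. cbn [fst] in HM.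
  apply fires_single in H0. destruct H0 as [Hen Hf].
  destruct t as [t j|Y t j]; [exfalso; exact (Hvisible t H)|].
  assert (Y = X).
  { specialize (Hen (Pcoord Y)); simpl in Hen. rewrite indicator_true in Hen by auto.
    apply NNPP; intro Hn; rewrite (dm_coord_other _ _ _ _ HM) in Hen; auto; lia. }
  subst Y.
  assert (HE : In (t, j) E).
  { specialize (Hen (Pdone t j)); simpl in Hen. rewrite indicator_true in Hen by auto.
    rewrite (dm_done _ _ _ _ HM) in Hen. apply msg_count_In; auto. }
  apply in_split in HE. destruct HE as [E1 [E2 ->]].
  exists (coord_step X t j), (E1 ++ E2). split; [rewrite !length_app; simpl; lia|].
  replace M' with (fun s => M s - dpre s (Tcoord X t j) + dpost (Tcoord X t j) s);
    [apply st_related_process; auto|].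
  apply functional_extensionality; intro s; rewrite Hf; auto.
Qed.

Lemma st_related_tau X U p E x y :
  st_related X U (p :: E) x y ->
  exists x', st_step D x STtau x' /\ st_related (coord_step X (fst p) (snd p)) U E x' y.
Proof.
  intros HR. destruct x as [Md Ud], p as [t j].
  exists (fun s => Md s - dpre s (Tcoord X t j) + dpost (Tcoord X t j) s, Ud).
  split; [|apply (st_related_process X U [] E t j); auto].
  apply (st_tau Act D Md _ Ud (Tcoord X t j)); [reflexivity|].
  apply fires_single. split; [|intro; reflexivity].
  destruct HR as [_ [_ [HM _]]]. cbn [fst] in HM.
  intros [Y|t' j'|j'|j' w]; simpl; try lia.
  - destruct (classic (Y = X)) as [->|];
      [rewrite indicator_true, (dm_coord _ _ _ _ HM)|rewrite indicator_false]; auto; lia.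
  - rewrite (dm_done _ _ _ _ HM). simpl. unfold indicator.
    destruct (excluded_middle_informative _) as [[-> ->]|]; [|lia].
    destruct (excluded_middle_informative _); [lia|tauto].
Qed.

Lemma st_related_flush X U E x y : st_related X U E x y ->
  exists X' x', ltau_star (stlab Act) STtau (st_lts D) x x' /\ st_related X' U [] x' y.
Proof.
  revert X x. induction E as [|p E IH]; intros X x HR; [exists X, x; split; auto; apply rt_refl|].
  destruct (st_related_tau X U p E x y HR) as [x1 [Hs HR1]].
  destruct (IH _ _ HR1) as [X2 [x2 [Ht HR2]]].
  exists X2, x2; split; auto. eapply rt_trans; [apply rt_step; exact Hs|exact Ht].
Qed.

Lemma st_related_no_divergence n : forall X U E x y, length E <= n -> st_related X U E x y ->
  forall f : nat -> st_marking D, f 0 = x -> ~ (forall k, st_step D (f k) STtau (f (S k))).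
Proof.
  induction n as [|n IH]; intros X U E x y Hl HR f Hf0 Hf;
    destruct (st_related_tau_inv X U E x y (f 1) HR) as [X' [E' [Hl' HR']]];
    try (rewrite <- Hf0; apply Hf); [lia|].
  apply (IH X' U E' (f 1) y ltac:(lia) HR' (fun k => f (S k))); auto.
Qed.

Lemma st_related_start_enabled X U x y w : st_related X U [] x y -> enables (fst y) w ->
  exists id, enables (fst x) (Tfire w id).
Proof.
  intros [HX [HP [HM [HUd [HUn HMn]]]]] Hw. rewrite app_nil_r in *.
  pose proof (cluster_assignment_bound X _ HX HP) as Hb.
  assert (Hen : enables (cmark X) w)
    by (intro s; specialize (Hw s); rewrite HMn in Hw; simpl in Hw; lia).
  destruct (wf_cover _ HX w Hen) as [j [Hj Kw]].
  assert (Hnin : ~ In j (map snd U)).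
  { intro Hin. apply in_map_iff in Hin. destruct Hin as [[k j'] [Hjj Hk]]. simpl in Hjj; subst j'.
    destruct HP as [HPin _]. destruct (HPin (k, j)) as [_ Kk]; [auto|]. simpl in Kk.
    destruct (in_cluster_conflict X j k w HX Hj Kk Kw) as [_ [_ Hov]].
    apply (overlap_not_concurrent (cmark X) k w (wf_reachable _ HX) Hov). intro s.
    specialize (Hw s); rewrite HMn in Hw; simpl in Hw. specialize (Hb s).
    pose proof (pre_le_preG _ _ (map fst U) k s (in_map fst U (k, j) Hk)). lia. }
  exists j. intros [Y|t' j'|j'|j' w']; simpl; try lia.
  - unfold indicator. destruct (excluded_middle_informative _) as [->|]; [|lia].
    rewrite (dm_token _ _ _ _ HM), indicator_true; auto.
  - unfold indicator at 1. destruct (excluded_middle_informative _) as [[-> ->]|]; [|lia].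
    apply (dm_offer _ _ _ _ HM); auto.
Qed.

Lemma st_related_init : st_related coord_init [] [] (dinit, []) (M0 N, []).
Proof.
  split; [apply coord_init_wf|split; [|split; [|split; [|split]]]]; simpl; auto.
  - split; [simpl; tauto|constructor].
  - constructor; simpl; intros.
    + apply indicator_true; auto.
    + apply indicator_false; auto.
    + reflexivity.
    + apply indicator_iff. tauto.
    + rewrite indicator_true; auto.
    + unfold indicator in H0. destruct (excluded_middle_informative _); [tauto|lia].
    + apply indicator_false. intros [[H' _] _]. lia.
  - intro s; lia.
Qed.

Definition st_corresponds (x : st_marking D) (y : st_marking N) : Prop :=
  exists X U E, st_related X U E x y.

Lemma D_step_matched : forall x y a x',
  st_corresponds x y -> st_step D x a x' ->
  exists yd y', ltau_star (stlab Act) STtau (st_lts N) y yd /\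
    (st_step N yd a y' \/ (a = STtau /\ yd = y')) /\ st_corresponds x yd /\ st_corresponds x' y'.
Proof.
  intros x [Mn Un] a x' [X [U [E HR]]] Hs. destruct x as [Md Ud].
  exists (Mn, Un). inversion Hs as [Ma Ua r b Hr Hen|Ma Ua r b n Hn Hk Hr|Ma M' Ua r Hr Hf]; subst.
  - destruct r as [w id|Y t j]; simpl in Hr; [|discriminate].
    apply enabled_single in Hen.
    destruct (st_related_start X U E Md Ud Mn Un w id HR Hen) as [HwN HR'].
    exists (fun s => Mn s - pre N s w, Un ++ [w]). split; [apply rt_refl|split].
    + left. apply st_plus; auto. apply enabled_single; auto.
    + split; [exists X, U, E; auto|exists X, (U ++ [(w, id)]), E; auto].
  - destruct n as [|k]; [lia|]. replace (S k - 1) with k in * by lia.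
    destruct (st_related_finish X U E Md Ud Mn Un k r HR Hk) as [t [id [-> [HkN HR']]]].
    exists (fun s => Mn s + post N t s, firstn k Un ++ skipn (S k) Un).
    split; [apply rt_refl|split].
    + left. pose proof (st_minus Act N Mn Un t b (S k) Hn) as Hst.
      replace (S k - 1) with k in Hst by lia. apply Hst; auto.
    + split; [exists X, U, E; auto|exists X, (firstn k U ++ skipn (S k) U), ((t, id) :: E); auto].
  - destruct (st_related_tau_inv X U E (Md, Ud) (Mn, Un) (M', Ud) HR Hs) as [X' [E' [_ HR']]].
    exists (Mn, Un). split; [apply rt_refl|split; [right; auto|]].
    split; [exists X, U, E; auto|exists X', U, E'; auto].
Qed.

Lemma N_step_matched : forall y x a y',
  st_corresponds x y -> st_step N y a y' ->
  exists xd x', ltau_star (stlab Act) STtau (st_lts D) x xd /\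
    (st_step D xd a x' \/ (a = STtau /\ xd = x')) /\ st_corresponds xd y /\ st_corresponds x' y'.
Proof.
  intros [Mn Un] x a y' [X [U [E HR]]] Hs. destruct x as [Md Ud].
  inversion Hs as [Ma Ua t b Ht Hen|Ma Ua t b n Hn Hk Ht|Ma M' Ua t Ht _]; subst;
    [|clear Hs|exfalso; exact (Hvisible t Ht)].
  - apply enabled_single in Hen.
    destruct (st_related_flush X U E (Md, Ud) (Mn, Un) HR) as [X1 [[Md1 Ud1] [Hflush HR1]]].
    destruct (st_related_start_enabled X1 U (Md1, Ud1) (Mn, Un) t HR1 Hen) as [id Hid].
    destruct (st_related_start X1 U [] Md1 Ud1 Mn Un t id HR1 Hid) as [_ HR'].
    exists (Md1, Ud1), (fun s => Md1 s - dpre s (Tfire t id), Ud1 ++ [Tfire t id]).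
    split; [exact Hflush|split].
    + left. apply st_plus; auto. apply enabled_single; auto.
    + split; [exists X1, U, []; auto|exists X1, (U ++ [(t, id)]), []; auto].
  - destruct n as [|k]; [lia|]. replace (S k - 1) with k in * by lia.
    pose proof HR as [_ [_ [_ [HUd [HUn _]]]]]. simpl in HUd, HUn. subst Ud Un.
    rewrite nth_error_map in Hk.
    destruct (nth_error U k) as [[t' id]|] eqn:Ek; simpl in Hk; [|discriminate].
    injection Hk; intros; subst t'.
    assert (HkD : nth_error (map dfire U) k = Some (Tfire t id))
      by (rewrite nth_error_map, Ek; auto).
    destruct (st_related_finish X U E Md (map dfire U) Mn (map fst U) k _ HR HkD)
      as [t2 [id2 [Heq [_ HR']]]].
    injection Heq; intros; subst t2 id2.
    exists (Md, map dfire U),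
      (fun s => Md s + dpost (Tfire t id) s, firstn k (map dfire U) ++ skipn (S k) (map dfire U)).
    split; [apply rt_refl|split].
    + left. pose proof (st_minus Act D Md (map dfire U) (Tfire t id) b (S k) Hn) as Hst.
      replace (S k - 1) with k in Hst by lia. apply Hst; auto.
    + split; [exists X, U, E; auto|exists X, (firstn k U ++ skipn (S k) U), ((t, id) :: E); auto].
Qed.

Theorem D_bSTb_N : bSTb_div D N.
Proof.
  exists st_corresponds. split; [exists coord_init, [], []; apply st_related_init|split; split].
  - exact D_step_matched.
  - intros x y f Hf0 Hf HRf. exfalso. destruct (HRf 0) as [X [U [E HR]]].
    exact (st_related_no_divergence (length E) X U E (f 0) y (le_n _) HR f eq_refl Hf).
  - exact N_step_matched.
  - intros y x f Hf0 Hf HRf. exfalso.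
    specialize (Hf 0). inversion Hf as [| |Ma M' Ua t Ht _]. exact (Hvisible t Ht).
Qed.

End Distribution.

Theorem corollary7p13 (Act : Type) (N : net Act)
  (approx : net Act -> net Act -> Prop) :
  Equivalence approx ->
  (forall N1 N2, bSTb_div N1 N2 -> approx N1 N2) ->
  (forall N1 N2, approx N1 N2 -> step_failures_eq N1 N2) ->
  finitary N -> plain N -> structural_conflict N ->
  ((exists D : net Act, distributed D /\ approx D N) <-> ~ has_pure_M N).
Proof.
  intros _ Hbisim Hfailures [Hpre _] Hplain Hsc. split.
  - intros [D' [HD Happrox]].
    exact (distributable_no_pure_M N D' Hplain Hsc HD (Hfailures _ _ Happrox)).
  - intro HnoM. exists (D Act N). split.
    + apply D_distributed.
    + apply Hbisim, (D_bSTb_N Act N Hpre (proj2 Hplain) Hsc HnoM).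
Qed.
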